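(* Fix $M<\infty$, $\kappa\in(0,1/2)$, and let $\mathcal{G}_1,\mathcal{G}_2,\dots$ be a (finite or countable) sequence of classes of allocations. Suppose the penalties satisfy: there exist positive constants $c_0,c_1$ such that for all $n,k$ and $\epsilon>0$, $\sup_{P\in\mathcal{P}(M,\kappa)}P^n\big(W_n(\hat G_{n,k})-W(\hat G_{n,k})-C_n(k)>\epsilon\big)\le c_1e^{-2c_0n\epsilon^2}$. Then there exists a positive constant $\Delta$, not depending on $n$, such that for every $n$, every $P\in\mathcal{P}(M,\kappa)$ and every $\epsilon>0$, $$P^n\big(R_n(\hat G_n)-W(\hat G_n)>\epsilon\big)\le\Delta e^{-2c_0n\epsilon^2},$$ where $R_n(\hat G_n):=\max_kR_{n,k}(\hat G_{n,k})$.
   Context: $P$ is the distribution of $(Y,D,X)$ with $Y\in\mathbb{R}$, $D\in\{0,1\}$, $X\in\mathcal{X}\subseteq\mathbb{R}^{d_x}$; data i.i.d. from $P$. $e(x)=E_P[D\mid X=x]$ (known). $\mathcal{P}(M,\kappa)$: distributions with support of $Y$ in $[-M/2,M/2]$ and $e(x)\in[\kappa,1-\kappa]$ for all $x$. Welfare $W(G)=E_P[(\frac{YD}{e(X)}-\frac{Y(1-D)}{1-e(X)})\mathbf{1}\{X\in G\}]$. $\tau_i=\frac{Y_iD_i}{e(X_i)}-\frac{Y_i(1-D_i)}{1-e(X_i)}$, $W_n(G)=\frac1n\sum_i\tau_i\mathbf{1}\{X_i\in G\}$, $\hat G_{n,k}\in\arg\max_{G\in\mathcal{G}_k}W_n(G)$.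 With data-dependent penalties $C_n(k)$, $R_{n,k}(G)=W_n(G)-C_n(k)-\sqrt{k/n}$; the PWM rule is $\hat G_n=\hat G_{n,\hat k}$ with $\hat k\in\arg\max_kR_{n,k}(\hat G_{n,k})$. Maximizers assumed to exist. *)

From HB Require Import structures.
From mathcomp Require Import all_boot all_order all_algebra.
From mathcomp Require Import all_classical all_reals all_analysis.
Set Implicit Arguments. Unset Strict Implicit. Unset Printing Implicit Defensive.
Import Order.TTheory GRing.Theory Num.Theory.
Local Open Scope classical_set_scope.
Local Open Scope ring_scope.

(* One observation (Y, D, X) with Y in R, D in {0,1} (as bool), X in R^dx. *)
Definition Obs (R : realType) (dx : nat) : Type := (R * bool * dx.-tuple R)%type.

Section Defs.
Variables (R : realType) (dx : nat).

Definition obsY (z : Obs R dx) : R := z.1.1.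
Definition obsD (z : Obs R dx) : R := (z.1.2)%:R.
Definition obsX (z : Obs R dx) : dx.-tuple R := z.2.

Definition tau (e : dx.-tuple R -> R) (z : Obs R dx) : R :=
  obsY z * obsD z / e (obsX z) - obsY z * (1 - obsD z) / (1 - e (obsX z)).

Definition welfare (P : probability (Obs R dx) R) (e : dx.-tuple R -> R)
    (G : set (dx.-tuple R)) : R :=
  Rintegral P setT (fun z => tau e z * \1_G (obsX z)).

Definition emp_welfare (e : dx.-tuple R -> R) (n : nat) (s : n.-tuple (Obs R dx))
    (G : set (dx.-tuple R)) : R :=
  n%:R^-1 * \sum_(i < n) tau e (tnth s i) * \1_G (obsX (tnth s i)).

(* e is (a version of) the propensity score E_P[D | X = .] *)
Definition is_propensity (P : probability (Obs R dx) R) (e : dx.-tuple R -> R) : Prop :=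
  measurable_fun setT e /\
  forall A : set (dx.-tuple R), measurable A ->
    (\int[P]_(z in obsX @^-1` A) (obsD z)%:E =
     \int[P]_(z in obsX @^-1` A) (e (obsX z))%:E)%E.

Definition in_class (M kappa : R) (P : probability (Obs R dx) R)
    (e : dx.-tuple R -> R) : Prop :=
  P [set z | - (M / 2) <= obsY z <= M / 2] = 1%E /\
  is_propensity P e /\
  (forall x, kappa <= e x <= 1 - kappa).

Definition is_product_prob (P : probability (Obs R dx) R) (n : nat)
    (Pn : probability (n.-tuple (Obs R dx)) R) : Prop :=
  forall A : 'I_n -> set (Obs R dx), (forall i, measurable (A i)) ->
    Pn [set s | forall i, A i (tnth s i)] = (\prod_(i < n) P (A i))%E.

End Defs.

(* index set of the classes: {1, ..., K} (finite) or {1, 2, ...} (countable) *)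
Definition kset (K : option nat) : set nat :=
  [set k | (1 <= k)%N /\ (if K is Some m then (k <= m)%N else True)].

From HB Require Import structures.
From mathcomp Require Import all_boot all_order all_algebra.
From mathcomp Require Import all_classical all_reals all_analysis.
From mathcomp Require Import lra.
Import Order.TTheory GRing.Theory Num.Theory.
Local Open Scope classical_set_scope.
Local Open Scope ring_scope.

(** The event that the penalized welfare overestimates the true welfare by
  more than [eps] splits along the selected index [k = khat]. On the piece
  indexed by [k] the overestimate of the class-[k] maximizer exceeds
  [eps + sqrt (k / n)], which by the penalty condition has probability at most
  [c1 exp (-2 c0 n (eps + sqrt (k / n))^2) <= c1 exp (-2 c0 n eps^2) q^k] with
  [q = exp (-2 c0) < 1]. The union bound and the geometric series then give
  the claim with [Delta = c1 / (1 - q)]. *)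

Lemma nneseries_geometric (R : realType) (a q : R) : 0 <= q < 1 ->
  (\sum_(k <oo) (a * q ^+ k)%:E = (a / (1 - q))%:E)%E.
Proof.
case/andP => q0 q1; apply: cvg_lim => //; apply: cvg_EFin.
  by apply: nearW => m; rewrite sumEFin.
rewrite (_ : _ \o _ = series (geometric a q)).
  by apply: cvg_geometric_series; rewrite ger0_norm.
by apply/funext => m /=; rewrite sumEFin.
Qed.

Section geometric_union_bound.
Context d (T : measurableType d) (R : realType) (mu : {measure set T -> \bar R}).

Lemma measure_bigcup_geometric_le (D : set nat) (F : nat -> set T) (a q : R) :
  0 <= a -> 0 <= q < 1 -> (forall k, D k -> measurable (F k)) ->
  (forall k, D k -> mu (F k) <= (a * q ^+ k)%:E)%E ->
  (mu (\bigcup_(k in D) F k) <= (a / (1 - q))%:E)%E.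
Proof.
move=> a0 q01 mF muF; rewrite bigcup_mkcond -nneseries_geometric //.
set G := fun k => if k \in D then F k else set0.
have mG k : measurable (G k) by rewrite /G; case: ifPn => // /set_mem /mF.
have mUG : measurable (\bigcup_k G k) by exact: bigcup_measurable.
apply: le_trans (@measure_sigma_subadditive _ _ _ mu _ G mG mUG (@subset_refl _ _)) _.
apply: lee_nneseries => [k _ _|k _]; first exact: measure_ge0.
rewrite /G; case: ifPn => [/set_mem /muF //|_].
by rewrite measure0 lee_fin mulr_ge0 // exprn_ge0 //; case/andP: q01.
Qed.

End geometric_union_bound.

Lemma measurable_lt_fun d (T : measurableType d) (R : realType) (f : T -> R) (a : R) :
  measurable_fun setT f -> measurable [set x | a < f x].
Proof.
move=> mf; rewrite (_ : [set x | a < f x] = f @^-1` `]a, +oo[).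
  by rewrite -[_ @^-1` _]setTI; apply: mf.
by apply/seteqP; split => x /=; rewrite in_itv /= andbT.
Qed.

Lemma expR_shift_sqrt_le (R : realType) (c n eps : R) (k : nat) :
  0 <= c -> 0 < n -> 0 <= eps ->
  expR (- (c * n * (eps + Num.sqrt (k%:R / n)) ^+ 2))
    <= expR (- (c * n * eps ^+ 2)) * expR (- c) ^+ k.
Proof.
move=> c0 n0 eps0; rewrite -expRM_natr -expRD ler_expR.
set t := Num.sqrt (k%:R / n).
have nt2 : n * t ^+ 2 = k%:R.
  rewrite /t sqr_sqrtr; last by rewrite divr_ge0 // ltW.
  by rewrite mulrC divfK // gt_eqF.
have : n * eps ^+ 2 + k%:R <= n * (eps + t) ^+ 2.
  rewrite -nt2 -mulrDr ler_pM2l // sqrrD lerD2r lerDl.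
  by rewrite mulrn_wge0 // mulr_ge0 // sqrtr_ge0.
move=> /(ler_wpM2l c0); rewrite -!mulrA mulrDr mulNr; lra.
Qed.

Theorem lemmaA2 (R : realType) (dx : nat) (M kappa : R)
  (K : option nat) (Gk : nat -> set (set (dx.-tuple R)))
  (Ghat : (dx.-tuple R -> R) -> forall n : nat, nat -> n.-tuple (Obs R dx) -> set (dx.-tuple R))
  (C : (dx.-tuple R -> R) -> forall n : nat, nat -> n.-tuple (Obs R dx) -> R)
  (khat : (dx.-tuple R -> R) -> forall n : nat, n.-tuple (Obs R dx) -> nat)
  (c0 c1 : R) :
  0 < kappa -> kappa < 1 / 2 ->
  (* G^_{n,k} maximizes W_n over G_k *)
  (forall e n k s, kset K k ->
     Gk k (Ghat e n k s) /\
     forall G, Gk k G -> emp_welfare e s G <= emp_welfare e s (Ghat e n k s)) ->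
  (* k^ maximizes R_{n,k}(G^_{n,k}) = W_n(G^_{n,k}) - C_n(k) - sqrt(k/n) over k *)
  (forall e n s, kset K (khat e n s) /\
     forall k, kset K k ->
       emp_welfare e s (Ghat e n k s) - C e n k s - Num.sqrt (k%:R / n%:R)
       <= emp_welfare e s (Ghat e n (khat e n s) s) - C e n (khat e n s) s
          - Num.sqrt ((khat e n s)%:R / n%:R)) ->
  (* measurability of the statistics involved (implicit in the paper) *)
  (forall P e, in_class M kappa P e -> forall n k, kset K k ->
     measurable_fun setT (fun s : n.-tuple (Obs R dx) =>
       emp_welfare e s (Ghat e n k s) - welfare P e (Ghat e n k s) - C e n k s) /\
     measurable [set s : n.-tuple (Obs R dx) | khat e n s = k]) ->
  0 < c0 -> 0 < c1 ->
  (* penalty condition *)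
  (forall (n : nat) (k : nat) (eps : R), (1 <= n)%N -> kset K k -> 0 < eps ->
     forall P e, in_class M kappa P e ->
     forall Pn : probability (n.-tuple (Obs R dx)) R, is_product_prob P Pn ->
       (Pn [set s | (emp_welfare e s (Ghat e n k s) - welfare P e (Ghat e n k s)
                    - C e n k s > eps)%R]
        <= (c1 * expR (- (2 * c0 * n%:R * eps ^+ 2)))%:E)%E) ->
  exists Delta : R, 0 < Delta /\
    forall (n : nat) (P : probability (Obs R dx) R) (e : dx.-tuple R -> R),
      (1 <= n)%N -> in_class M kappa P e ->
      forall Pn : probability (n.-tuple (Obs R dx)) R, is_product_prob P Pn ->
      forall eps : R, 0 < eps ->
        (Pn [set s | ((emp_welfare e s (Ghat e n (khat e n s) s) - C e n (khat e n s) s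
                      - Num.sqrt ((khat e n s)%:R / n%:R))
                     - welfare P e (Ghat e n (khat e n s) s) > eps)%R]
         <= (Delta * expR (- (2 * c0 * n%:R * eps ^+ 2)))%:E)%E.
Proof.
move=> _ _ _ khat_opt stats_mble c0_gt0 c1_gt0 penalty_tail.
set q := expR (- (2 * c0)).
have q01 : 0 <= q < 1 by rewrite expR_ge0 expR_lt1 oppr_lt0 mulr_gt0.
have q1 : 0 < 1 - q by rewrite subr_gt0; case/andP: q01.
exists (c1 / (1 - q)); split; first by rewrite divr_gt0.
move=> n P e n1 Pe_class Pn Pn_prod eps eps_gt0.
set E := expR _.
pose f k s : R := emp_welfare e s (Ghat e n k s) - welfare P e (Ghat e n k s) - C e n k s.
pose t k : R := eps + Num.sqrt (k%:R / n%:R).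
pose F k := [set s | khat e n s = k] `&` [set s | t k < f k s].
rewrite [X in Pn X](_ : _ = \bigcup_(k in kset K) F k); last first.
  apply/seteqP; split => s /=.
    by move=> ?; exists (khat e n s); [case: (khat_opt e n s) | split=> //=; rewrite /t /f; lra].
  by move=> [k _ [<- /=]]; rewrite /t /f; lra.
have mF k : kset K k -> measurable (F k).
  by move=> /(stats_mble P e Pe_class n k) [mf mk]; apply: measurableI mk _; exact: measurable_lt_fun.
rewrite mulrAC; apply: measure_bigcup_geometric_le => // [|k kK].
  by rewrite mulr_ge0 ?expR_ge0 ?ltW.
have [mf _] := stats_mble P e Pe_class n k kK.
apply: le_trans (le_measure _ _ _ (@subIsetr _ _ _)) _; rewrite ?inE.
- exact: mF.
- exact: measurable_lt_fun.
have t_gt0 : 0 < t k by rewrite ltr_wpDr ?sqrtr_ge0.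
apply: le_trans (penalty_tail n k _ n1 kK t_gt0 P e Pe_class Pn Pn_prod) _.
rewrite lee_fin -[c1 * E * _]mulrA ler_pM2l // /E /q.
by apply: expR_shift_sqrt_le; rewrite ?mulr_ge0 ?ltr0n ?ltW.
Qed.
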